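(* Let $V$ be a finite-dimensional real vector space and $F\in\Lambda^4V^*$ a 4-form such that for all $X,Y\in V$: $\iota_XF\wedge F=0$ and $\iota_XF\wedge\iota_YF=0$. Then $\iota_Z\iota_Y\iota_XF\wedge F=0$ for all $X,Y,Z\in V$, and consequently $F$ is decomposable, i.e. $F=\theta_1\wedge\theta_2\wedge\theta_3\wedge\theta_4$ for some $\theta_i\in V^*$.
   Context: $\iota_X$ denotes interior multiplication (contraction) by the vector $X$. A $p$-form is decomposable if it is a wedge product of $p$ one-forms. *)

(* Exterior algebra of (R^n)^* in coordinates:
   a (mixed-degree) form is its coefficient family on the standard basis
   e^S = e^{s_1} /\ ... /\ e^{s_k}  (s_1 < ... < s_k, S = {s_1,...,s_k}). *)
From HB Require Import structures.
From mathcomp Require Import all_boot all_order all_algebra.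
From mathcomp Require Import reals.
Set Implicit Arguments. Unset Strict Implicit. Unset Printing Implicit Defensive.
Import Order.TTheory GRing.Theory Num.Theory.
Local Open Scope ring_scope.

Definition extform (R : realType) (n : nat) := {ffun {set 'I_n} -> R}.

Definition is_pform (R : realType) (n p : nat) (a : extform R n) : Prop :=
  forall S : {set 'I_n}, #|S| != p -> a S = 0.

(* number of inversions of the concatenation of increasing lists A, B *)
Definition ninv (n : nat) (A B : {set 'I_n}) : nat :=
  #|[set p : 'I_n * 'I_n | (p.1 \in A) && (p.2 \in B) && (p.2 < p.1)%N]|.

(* wedge product: e^A /\ e^B = (-1)^{ninv A B} e^{A u B} if disjoint, else 0 *)
Definition wedge (R : realType) (n : nat) (a b : extform R n) : extform R n :=
  [ffun S : {set 'I_n} =>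
     \sum_(A : {set 'I_n} | A \subset S)
        (-1) ^+ ninv A (S :\: A) * a A * b (S :\: A)].

(* interior multiplication by the vector X in R^n:
   iota_{e_i} e^{S u {i}} = (-1)^{#{j in S | j < i}} e^S for i \notin S *)
Definition interior (R : realType) (n : nat) (X : 'I_n -> R) (a : extform R n)
  : extform R n :=
  [ffun S : {set 'I_n} =>
     \sum_(i : 'I_n | i \notin S)
        X i * (-1) ^+ #|[set j in S | (j < i)%N]| * a (i |: S)].

(* the one-form with coordinates t, i.e. sum_i t_i e^i *)
Definition oneform (R : realType) (n : nat) (t : 'I_n -> R) : extform R n :=
  [ffun S : {set 'I_n} => \sum_(i : 'I_n | S == [set i]) t i].

(* Contraction [iota_X] is a graded derivation of the wedge product.  Contracting
   [iota_X F /\ F = 0] with [Y] gives [iota_Y iota_X F /\ F = 0]; contracting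
   [iota_X F /\ iota_Y F = 0] with [Z] shows that
   [C X Y Z = iota_Y iota_X F /\ iota_Z F] is unchanged by exchanging [X] and
   [Z].  As [C] is also antisymmetric in [X] and [Y], it vanishes, and one more
   contraction yields [iota_Z iota_Y iota_X F /\ F = 0].  Only the parity of
   the degree of [F] matters here.

   A (p+1)-form [w] all of whose p-fold contractions [phi] satisfy
   [phi /\ w = 0] is decomposable.  Pick [w_S <> 0] and [i] in [S]; contracting
   [w] with the other elements of [S] gives a one-form [phi] with
   [phi(e_i) <> 0] and [phi /\ w = 0], and contracting [phi /\ w] with [e_i]
   shows that [w] is a multiple of [iota_i w /\ phi].  The p-fold contractions
   of [iota_i w] vanish on [e_i], so [iota_i w] satisfies the same hypothesis
   and induction on p applies. *)

From HB Require Import structures.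
From mathcomp Require Import all_boot all_order all_algebra.
From mathcomp Require Import reals ring lra.
Set Implicit Arguments. Unset Strict Implicit. Unset Printing Implicit Defensive.
Import Order.TTheory GRing.Theory Num.Theory.
Local Open Scope ring_scope.

Lemma signr_ifodd (R : pzRingType) (k : nat) : (-1) ^+ k = (if odd k then -1 else 1 : R).
Proof. by rewrite -signr_odd; case: (odd k); rewrite ?expr1 ?expr0. Qed.

Ltac sign_ring := rewrite ?exprD !signr_ifodd /=;
  repeat match goal with |- context [odd ?k] => case: (odd k) => /= end; ring.

Section Subsets.
Variable n : nat.
Implicit Types (A B S : {set 'I_n}) (i : 'I_n).

Definition nlt S i := #|[set j in S | (j < i)%N]|.
Definition ngt S i := #|[set j in S | (i < j)%N]|.

Lemma nlt_sum S i : nlt S i = (\sum_(j in S) (j < i)%N)%N.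
Proof.
rewrite /nlt -sum1_card big_mkcond [RHS]big_mkcond /=.
by apply: eq_bigr => j _; rewrite !inE; case: (j \in S); case: (j < i)%N.
Qed.

Lemma ngt_sum S i : ngt S i = (\sum_(j in S) (i < j)%N)%N.
Proof.
rewrite /ngt -sum1_card big_mkcond [RHS]big_mkcond /=.
by apply: eq_bigr => j _; rewrite !inE; case: (j \in S); case: (i < j)%N.
Qed.

Lemma ninv_sum A B : ninv A B = (\sum_(x in A) \sum_(y in B) (y < x)%N)%N.
Proof.
rewrite /ninv -sum1_card.
rewrite [RHS](eq_bigr (fun x : 'I_n => \sum_(y in B | (y < x)%N) 1)%N); last first.
  by move=> x _; rewrite big_mkcond [RHS]big_mkcond /=; apply: eq_bigr => y _; case: (y \in B).
by rewrite pair_big_dep /=; apply: eq_bigl => p; rewrite !inE andbA.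
Qed.

Lemma nltU1 S i j : i \notin S -> nlt (i |: S) j = ((i < j)%N + nlt S j)%N.
Proof. by move=> iS; rewrite !nlt_sum big_setU1. Qed.

Lemma nltD A S i : A \subset S -> nlt S i = (nlt A i + nlt (S :\: A) i)%N.
Proof. by move=> AS; rewrite !nlt_sum (big_setID A) /= (setIidPr AS). Qed.

Lemma nlt_ngt A i : i \notin A -> (nlt A i + ngt A i = #|A|)%N.
Proof.
move=> iA; rewrite nlt_sum ngt_sum -big_split -sum1_card /=.
apply: eq_bigr => x xA; have xi : x != i by apply: contraTneq xA => ->.
by case: ltngtP => //= h; move: xi; rewrite (val_inj h) eqxx.
Qed.

Lemma ninvU1l A B i : i \notin A -> ninv (i |: A) B = (nlt B i + ninv A B)%N.
Proof. by move=> iA; rewrite !ninv_sum big_setU1 // nlt_sum. Qed.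

Lemma ninvU1r A B i : i \notin B -> ninv A (i |: B) = (ngt A i + ninv A B)%N.
Proof.
move=> iB; rewrite !ninv_sum ngt_sum -big_split /=.
by apply: eq_bigr => x _; rewrite big_setU1.
Qed.

Lemma ninvC A B : [disjoint A & B] -> (ninv A B + ninv B A = #|A| * #|B|)%N.
Proof.
move=> dAB; rewrite !ninv_sum [X in (_ + X)%N]exchange_big -big_split /=.
rewrite -sum1_card big_distrl /=; apply: eq_bigr => x xA.
rewrite -big_split /= mul1n -sum1_card; apply: eq_bigr => y yB.
have xy : x != y by apply: contraTneq yB => <-; rewrite (disjointFr dAB xA).
by case: ltngtP => //= h; move: xy; rewrite (val_inj h) eqxx.
Qed.

Lemma sum_subset_mem (V : nmodType) S i (f : {set 'I_n} -> V) : i \in S ->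
  \sum_(A : {set 'I_n} | (A \subset S) && (i \in A)) f A =
  \sum_(A : {set 'I_n} | (A \subset S) && (i \notin A)) f (i |: A).
Proof.
move=> iS; rewrite (reindex_onto (fun A => i |: A) (fun A => A :\ i)); last first.
  by move=> A /andP [_ iA]; rewrite setD1K.
apply: eq_bigl => A; rewrite setU11 andbT subUset sub1set iS /=.
case iA: (i \in A) => /=; last by rewrite andbT (setU1K (negbT iA)) eqxx andbT.
by rewrite andbF; apply/negbTE/andP => -[_ /eqP eA]; rewrite -eA setD11 in iA.
Qed.

Lemma sum_subsetU1 (V : nmodType) S i (f : {set 'I_n} -> V) : i \notin S ->
  \sum_(A : {set 'I_n} | A \subset i |: S) f A =
  \sum_(A : {set 'I_n} | A \subset S) f (i |: A) + \sum_(A : {set 'I_n} | A \subset S) f A.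
Proof.
move=> iS; rewrite (bigID (fun A : {set 'I_n} => i \in A)) /= sum_subset_mem ?setU11 //.
by congr (_ + _); apply: eq_bigl => A; rewrite -subsetD1 setU1K.
Qed.

Lemma sum_subset_compl (V : nmodType) S (f : {set 'I_n} -> V) :
  \sum_(A : {set 'I_n} | A \subset S) f A =
  \sum_(A : {set 'I_n} | A \subset S) f (S :\: A).
Proof.
rewrite (reindex_onto (fun A => S :\: A) (fun A => S :\: A)); last first.
  by move=> A AS; rewrite setDDr setDv set0U; apply/setIidPr.
apply: eq_bigl => A; rewrite subsetDl /= setDDr setDv set0U.
by apply/eqP/idP => [<-|/setIidPr //]; apply: subsetIl.
Qed.

End Subsets.

Section Forms.
Variables (R : realType) (n : nat).
Implicit Types (a b w : extform R n) (A S : {set 'I_n}) (i j : 'I_n) (X Y : 'I_n -> R).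

Lemma form0E S : (0 : extform R n) S = 0.
Proof. by rewrite ffunE. Qed.

Lemma formNE w S : (- w) S = - w S.
Proof. by rewrite ffunE. Qed.

Lemma form_eq0 w : (forall S, w S = 0) -> w = 0.
Proof. by move=> w0; apply/ffunP => S; rewrite w0 form0E. Qed.

Lemma pform_card p w S : is_pform p w -> w S != 0 -> #|S| = p.
Proof. by move=> wp wS; apply/eqP; apply: contraR wS => /wp ->. Qed.

Definition contract i w : extform R n :=
  [ffun S : {set 'I_n} => if i \in S then 0 else (-1) ^+ nlt S i * w (i |: S)].

Lemma contractE i w S :
  contract i w S = if i \in S then 0 else (-1) ^+ nlt S i * w (i |: S).
Proof. by rewrite ffunE. Qed.

Lemma interiorE X w S : interior X w S = \sum_i X i * contract i w S.
Proof.
rewrite ffunE big_mkcond /=; apply: eq_bigr => i _; rewrite contractE.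
by case: (i \in S); rewrite ?mulr0 // mulrA.
Qed.

Lemma interior_basis i w : interior (fun j => (j == i)%:R) w = contract i w.
Proof.
apply/ffunP => S; rewrite interiorE (bigD1 i) //= eqxx mul1r big1 ?addr0 //.
by move=> j /negbTE ->; rewrite mul0r.
Qed.

Lemma contract_pform p i w : is_pform p w -> is_pform p.-1 (contract i w).
Proof.
move=> wp S Sp; rewrite contractE; case: ifPn => // iS.
by rewrite wp ?mulr0 // cardsU1 iS add1n; case: p wp Sp.
Qed.

Lemma interior_pform p X w : is_pform p w -> is_pform p.-1 (interior X w).
Proof.
move=> wp S Sp; rewrite interiorE big1 // => i _.
by rewrite (contract_pform i wp Sp) mulr0.
Qed.

Lemma contractC i j w : contract i (contract j w) = - contract j (contract i w).
Proof.
apply/ffunP => S; rewrite formNE !contractE !in_setU1.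
have [->|ij] := eqVneq i j; first by case: (j \in S); rewrite /= ?mulr0 oppr0.
case iS: (i \in S); case jS: (j \in S); rewrite /= ?mulr0 ?oppr0 //.
rewrite !nltU1 ?iS ?jS // setUCA.
case: ltngtP => [_|_|/val_inj ji]; [sign_ring | sign_ring | by rewrite ji eqxx in ij].
Qed.

Lemma contract_interior i X w S :
  contract i (interior X w) S = \sum_j X j * contract i (contract j w) S.
Proof.
rewrite contractE; case: ifPn => iS.
  by rewrite big1 // => j _; rewrite (contractE i) iS mulr0.
rewrite interiorE mulr_sumr; apply: eq_bigr => j _.
by rewrite (contractE i) (negbTE iS); ring.
Qed.

Lemma interiorC X Y w : interior Y (interior X w) = - interior X (interior Y w).
Proof.
apply/ffunP => S; rewrite formNE !interiorE -sumrN.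
under eq_bigr do rewrite contract_interior mulr_sumr.
under [RHS]eq_bigr do rewrite contract_interior mulr_sumr -sumrN.
rewrite exchange_big; apply: eq_bigr => i _; apply: eq_bigr => j _.
by rewrite contractC formNE; ring.
Qed.

Lemma wedgeE a b S :
  wedge a b S = \sum_(A : {set 'I_n} | A \subset S) (-1) ^+ ninv A (S :\: A) * a A * b (S :\: A).
Proof. by rewrite ffunE. Qed.

Lemma wedge0l b : wedge 0 b = 0.
Proof. by apply: form_eq0 => S; rewrite wedgeE big1 // => A _; rewrite form0E; ring. Qed.

Lemma wedgeNl a b : wedge (- a) b = - wedge a b.
Proof.
apply/ffunP => S; rewrite formNE !wedgeE -sumrN; apply: eq_bigr => A _.
by rewrite formNE; ring.
Qed.

Lemma wedgeZr k a b S : wedge a [ffun T : {set 'I_n} => k * b T] S = k * wedge a b S.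
Proof.
rewrite !wedgeE mulr_sumr; apply: eq_bigr => A _.
by rewrite ffunE; ring.
Qed.

Lemma interior0 X : interior X (0 : extform R n) = 0.
Proof.
apply: form_eq0 => S; rewrite interiorE big1 // => i _.
by rewrite contractE form0E; case: ifP => _; ring.
Qed.

Lemma wedge_interiorl X a b S :
  wedge (interior X a) b S = \sum_i X i * wedge (contract i a) b S.
Proof.
rewrite wedgeE; under eq_bigr do rewrite interiorE mulr_sumr mulr_suml.
rewrite exchange_big; apply: eq_bigr => i _; rewrite wedgeE mulr_sumr.
by apply: eq_bigr => A _; ring.
Qed.

Lemma wedge_interiorr X a b S :
  wedge a (interior X b) S = \sum_i X i * wedge a (contract i b) S.
Proof.
rewrite wedgeE; under eq_bigr do rewrite interiorE mulr_sumr.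
rewrite exchange_big; apply: eq_bigr => i _; rewrite wedgeE mulr_sumr.
by apply: eq_bigr => A _; ring.
Qed.

Lemma contract_wedge_mem p i a b S : is_pform p a -> i \in S ->
  wedge (contract i a) b S + (-1) ^+ p * wedge a (contract i b) S = 0.
Proof.
move=> ap iS; rewrite !wedgeE (bigID (fun A : {set 'I_n} => i \in A)) /= big1; last first.
  by move=> A /andP [_ iA]; rewrite contractE iA mulr0 mul0r.
rewrite add0r [X in _ * X](bigID (fun A : {set 'I_n} => i \in A)) /=.
rewrite [X in _ * (_ + X)]big1; last first.
  by move=> A /andP [_ iA]; rewrite contractE in_setD iA iS mulr0.
(* the terms for [A] and [i |: A] cancel *)
rewrite addr0 sum_subset_mem // mulr_sumr -big_split /= big1 // => A /andP [_ iA].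
set B := S :\: (i |: A).
have iB : i \notin B by rewrite !inE eqxx.
have SA : S :\: A = i |: B.
  by apply/setP => x; rewrite !inE; case: eqP => [->|] //=; rewrite iA iS.
rewrite !contractE (negbTE iA) (negbTE iB) SA ninvU1r // ninvU1l //.
have [->|aA] := eqVneq (a (i |: A)) 0; first by rewrite !(mulr0, mul0r) addr0.
rewrite -(pform_card ap aA) cardsU1 iA -(nlt_ngt iA); sign_ring.
Qed.

Lemma contract_wedge_notin p i a b S : is_pform p a -> i \notin S ->
  contract i (wedge a b) S =
  wedge (contract i a) b S + (-1) ^+ p * wedge a (contract i b) S.
Proof.
move=> ap iS; rewrite contractE (negbTE iS) !wedgeE sum_subsetU1 // mulrDr.
congr (_ + _); rewrite !mulr_sumr; apply: eq_bigr => A AS;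
  have iA : i \notin A by apply: contra iS; apply: (subsetP AS).
- have -> : (i |: S) :\: (i |: A) = S :\: A.
    by apply/setP => x; rewrite !inE; case: eqP => [->|] //=; rewrite (negbTE iS) andbF.
  by rewrite contractE (negbTE iA) ninvU1l // (nltD i AS); sign_ring.
- have iSA : i \notin S :\: A by rewrite !inE (negbTE iS) andbF.
  have -> : (i |: S) :\: A = i |: (S :\: A).
    by apply/setP => x; rewrite !inE; case: eqP => [->|] //=; rewrite (negbTE iA).
  rewrite contractE (negbTE iSA) ninvU1r // (nltD i AS).
  have [->|aA] := eqVneq (a A) 0; first by rewrite !(mulr0, mul0r).
  by rewrite -(pform_card ap aA) -(nlt_ngt iA); sign_ring.
Qed.

Lemma contract_wedge p i a b S : is_pform p a ->
  contract i (wedge a b) S =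
  wedge (contract i a) b S + (-1) ^+ p * wedge a (contract i b) S.
Proof.
move=> ap; have [iS|iS] := boolP (i \in S); last exact: contract_wedge_notin.
by rewrite contractE iS contract_wedge_mem.
Qed.

Lemma interior_wedge p X a b S : is_pform p a ->
  interior X (wedge a b) S =
  wedge (interior X a) b S + (-1) ^+ p * wedge a (interior X b) S.
Proof.
move=> ap; rewrite interiorE wedge_interiorl wedge_interiorr mulr_sumr -big_split.
by apply: eq_bigr => i _; rewrite /= (contract_wedge _ _ _ ap); ring.
Qed.

Lemma wedgeC p q a b S : is_pform p a -> is_pform q b ->
  wedge a b S = (-1) ^+ (p * q) * wedge b a S.
Proof.
move=> ap bq; rewrite !wedgeE mulr_sumr [RHS]sum_subset_compl.
apply: eq_bigr => A AS; rewrite setDDr setDv set0U (setIidPr AS).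
have [->|aA] := eqVneq (a A) 0; first by rewrite !(mulr0, mul0r).
have [->|bA] := eqVneq (b (S :\: A)) 0; first by rewrite !(mulr0, mul0r).
have dA : [disjoint A & S :\: A] by rewrite disjoints_subset setDE setCI setCK subsetUr.
rewrite -(pform_card ap aA) -(pform_card bq bA) -(ninvC dA); sign_ring.
Qed.

Lemma wedge_interior3_eq0 k (F : extform R n) : is_pform k.*2.+2 F ->
  (forall X, wedge (interior X F) F = 0) ->
  (forall X Y, wedge (interior X F) (interior Y F) = 0) ->
  forall X Y Z, wedge (interior Z (interior Y (interior X F))) F = 0.
Proof.
move=> F_deg iFF iFiF.
have iF_deg X : is_pform k.*2.+1 (interior X F) := interior_pform X F_deg.
have iiF_deg X Y : is_pform k.*2 (interior Y (interior X F)) :=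
  interior_pform Y (iF_deg X).
have sign_odd : (-1) ^+ k.*2.+1 = -1 :> R by rewrite -signr_odd /= odd_double expr1.
have sign_even m : (-1) ^+ (k.*2 * m) = 1 :> R.
  by rewrite -signr_odd oddM odd_double expr0.
have iiFF X Y : wedge (interior Y (interior X F)) F = 0.
  apply: form_eq0 => S; have := interior_wedge Y F S (iF_deg X).
  by rewrite iFF interior0 iFiF !form0E sign_odd mulN1r oppr0 addr0 => <-.
pose C X Y Z S := wedge (interior Y (interior X F)) (interior Z F) S.
have C_swap12 X Y Z S : C X Y Z S = - C Y X Z S.
  by rewrite /C interiorC wedgeNl formNE.
have C_swap13 X Y Z S : C X Z Y S = C Y Z X S.
  have := interior_wedge Z (interior Y F) S (iF_deg X).
  rewrite iFiF interior0 form0E (wedgeC S (iF_deg X) (iiF_deg Y Z)) mulnC sign_even.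
  by rewrite sign_odd mul1r mulN1r /C => /esym/eqP; rewrite subr_eq0 => /eqP.
move=> X Y Z; apply: form_eq0 => S.
have C0 : C X Y Z S = 0.
  have C_opp : C X Y Z S = - C X Y Z S.
    by rewrite {1}C_swap12 C_swap13 C_swap12 C_swap13 C_swap12 C_swap13 opprK.
  lra.
have := interior_wedge Z F S (iiF_deg X Y).
by rewrite (iiFF X Y) interior0 form0E -/(C X Y Z S) C0 mulr0 addr0.
Qed.

Definition contracts (xs : seq 'I_n) w : extform R n := foldr contract w xs.

Lemma contracts_pform p xs w : is_pform p w -> is_pform (p - size xs) (contracts xs w).
Proof.
move=> wp; elim: xs => [|x xs IHxs] /=; first by rewrite subn0.
by rewrite subnS; apply: contract_pform.
Qed.

Lemma contracts_contract_mem xs i w S : i \in S -> contracts xs (contract i w) S = 0.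
Proof.
elim: xs S => [|x xs IHxs] S iS /=; first by rewrite contractE iS.
by rewrite contractE IHxs ?mulr0 ?if_same // in_setU1 iS orbT.
Qed.

Lemma contracts_eq0 xs w S : uniq xs -> {in xs, forall x, x \notin S} ->
  (contracts xs w S == 0) = (w (S :|: [set x in xs]) == 0).
Proof.
elim: xs S => [|x xs IHxs] S /=.
  by move=> _ _; congr (w _ == 0); apply/setP => y; rewrite !inE orbF.
case/andP=> xxs uxs xsS; have xS := xsS x (mem_head x xs).
rewrite contractE (negbTE xS) mulf_eq0 signr_eq0 /= IHxs //.
  by congr (w _ == 0); apply/setP => y; rewrite !inE orbCA orbA.
move=> y yxs; rewrite in_setU1 negb_or xsS ?inE ?yxs ?orbT // andbT.
by apply: contraNneq xxs => <-.
Qed.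

Lemma contract_wedge_oneform phi w i S : is_pform 1 phi ->
  contract i (wedge phi w) S = phi [set i] * w S - wedge phi (contract i w) S.
Proof.
move=> phi1; rewrite (contract_wedge _ _ _ phi1) expr1 mulN1r wedgeE.
rewrite (bigD1 set0) ?sub0set //= big1 ?addr0; last first.
  by move=> A /andP [_ A0]; rewrite (contract_pform i phi1) ?mulr0 ?mul0r // cards_eq0.
by rewrite setD0 ninv_sum big_set0 expr0 mul1r contractE in_set0 nlt_sum big_set0 setU0 mul1r.
Qed.

Lemma wedge_oneform_contract_eq0 phi w i : is_pform 1 phi ->
  wedge phi w = 0 -> phi [set i] = 0 -> wedge phi (contract i w) = 0.
Proof.
move=> phi1 phiw phii; apply: form_eq0 => S.
have := contract_wedge_oneform w i S phi1.
rewrite phiw phii contractE !form0E mulr0 if_same mul0r sub0r.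
by move=> /esym/eqP; rewrite oppr_eq0 => /eqP.
Qed.

Lemma wedge_oneform_eq0_factor p phi w i : is_pform 1 phi -> is_pform p.+1 w ->
  wedge phi w = 0 -> phi [set i] != 0 ->
  w = wedge (contract i w) [ffun S : {set 'I_n} => (-1) ^+ p / phi [set i] * phi S].
Proof.
move=> phi1 wp phiw phii; apply/ffunP => S.
have := contract_wedge_oneform w i S phi1.
rewrite phiw contractE !form0E mulr0 if_same => /esym/eqP; rewrite subr_eq0 => /eqP.
rewrite (wedgeC S phi1 (contract_pform i wp)) mul1n wedgeZr.
by move/(canRL (mulKf phii)) => ->; rewrite mulrA [_^-1 * _]mulrC.
Qed.

Lemma oneform_of phi : is_pform 1 phi -> phi = oneform (fun i => phi [set i] : R).
Proof.
move=> phi1; apply/ffunP => S; rewrite ffunE.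
have [/eqP/cards1P [x ->]|S1] := eqVneq #|S| 1%N.
  by rewrite (big_pred1 x) // => i; apply/eqP/eqP => [/set1_inj|->].
by rewrite phi1 // big1 // => i /eqP SE; rewrite SE cards1 eqxx in S1.
Qed.

Definition wedge_oneforms (t : 'I_n -> R) (ts : seq ('I_n -> R)) : extform R n :=
  foldl (fun a s => wedge a (oneform s)) (oneform t) ts.

Lemma wedge_oneforms0 ts : wedge_oneforms (fun=> 0) ts = 0.
Proof.
rewrite /wedge_oneforms (_ : oneform _ = 0); last first.
  by apply: form_eq0 => S; rewrite ffunE big1.
by elim: ts => //= t ts; rewrite wedge0l.
Qed.

Theorem decomposable_of_wedge_contracts p w : is_pform p.+1 w ->
  (forall xs, size xs = p -> wedge (contracts xs w) w = 0) ->
  exists t ts, size ts = p /\ w = wedge_oneforms t ts.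
Proof.
elim: p w => [|p IHp] w wp wxs.
  by exists (fun i => w [set i]), [::]; rewrite /wedge_oneforms /= -oneform_of.
have [w0|[S wS]] : w = 0 \/ exists S, w S != 0.
  have [/existsP|/existsPn w0] := boolP [exists S, w S != 0]; first by right.
  by left; apply: form_eq0 => S; apply/eqP; rewrite -[_ == _]negbK w0.
  by exists (fun=> 0), (nseq p.+1 (fun=> 0)); rewrite size_nseq w0 wedge_oneforms0.
have Sp : #|S| = p.+2 := pform_card wp wS.
have [i iS] : exists i, i \in S by apply/set0Pn; rewrite -card_gt0 Sp.
pose xs := enum (S :\ i).
have xsp : size xs = p.+1.
  by rewrite -cardE; move: (cardsD1 i S); rewrite iS Sp add1n => -[].
pose phi := contracts xs w.
have phi1 : is_pform 1 phi by have := contracts_pform (xs := xs) wp; rewrite xsp subSnn.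
have phii : phi [set i] != 0.
  rewrite contracts_eq0 ?enum_uniq //; last by move=> x; rewrite mem_enum !inE => /andP [].
  suff -> : [set i] :|: [set x in xs] = S by [].
  by apply/setP => x; rewrite !inE mem_enum !inE; case: eqP => // ->.
pose psi := [ffun S : {set 'I_n} => (-1) ^+ p.+1 / phi [set i] * phi S].
have psi1 : is_pform 1 psi by move=> T T1; rewrite /psi ffunE (phi1 T T1) mulr0.
have [t [ts [tsp wat]]] : exists t (ts : seq ('I_n -> R)),
    size ts = p /\ contract i w = wedge_oneforms t ts.
  apply: IHp => [|ys ysp]; first exact: contract_pform wp.
  apply: wedge_oneform_contract_eq0.
  - by have := contracts_pform (xs := ys) (contract_pform i wp); rewrite ysp subSnn.
  - by rewrite /contracts -foldr_rcons wxs // size_rcons ysp.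
  - exact: contracts_contract_mem (set11 i).
exists t, (rcons ts (fun i => psi [set i])); split; first by rewrite size_rcons tsp.
rewrite {1}(wedge_oneform_eq0_factor phi1 wp (wxs xs xsp) phii) wat.
by rewrite /wedge_oneforms foldl_rcons -oneform_of.
Qed.

End Forms.

Theorem mainTheorem6 (R : realType) (n : nat) (F : extform R n) :
  is_pform 4 F ->
  (forall X : 'I_n -> R, wedge (interior X F) F = 0) ->
  (forall X Y : 'I_n -> R, wedge (interior X F) (interior Y F) = 0) ->
  (forall X Y Z : 'I_n -> R, wedge (interior Z (interior Y (interior X F))) F = 0) /\
  exists t1 t2 t3 t4 : 'I_n -> R,
    F = wedge (wedge (wedge (oneform t1) (oneform t2)) (oneform t3))
              (oneform t4).
Proof.
move=> F_deg iFF iFiF; have iiiFF := wedge_interior3_eq0 (k := 1) F_deg iFF iFiF.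
split=> //.
have [t [ts [ts3 ->]]] : exists t ts, size ts = 3 /\ F = wedge_oneforms t ts.
  apply: decomposable_of_wedge_contracts F_deg _ => -[|z [|y [|x []]]] //= _.
  by rewrite -!interior_basis iiiFF.
by case: ts ts3 => [|t2 [|t3 [|t4 []]]] // _; exists t, t2, t3, t4.
Qed.
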